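(* For every data instance $(A,u)\in\mathbb{R}^{n\times m}\times\mathbb{R}^m$, $\tau(A,u)\ge\bar\rho(A,u)$.
   Context: $\tau(A,u):=|z^*|$ with $z^*:=\max_{x\in\mathbb{R}^n}\min_{i}(u_i-a_i^\top x)$, where $a_i$ are the columns of $A$ (assumed of unit Euclidean norm, with $\{A\lambda:\lambda\ge0\}=\mathbb{R}^n$, so the max is attained). For data $d=(A,u)$ let $\mathcal{P}_d=\{x:A^\top x\le u\}$, $\mathcal{F}=\{d:\mathcal{P}_d\ne\emptyset\}$, $\mathcal{I}=\{d:\mathcal{P}_d=\emptyset\}$, with norm $\|(A,u)\|:=\max\{\|A\|_{1,2},\|u\|_\infty\}$, where $\|A\|_{1,2}=\max_{\|w\|_1=1}\|Aw\|_2$. Renegar's distance to ill-posedness: $\bar\rho(d):=\inf_{d+\Delta d\in\mathcal{I}}\|\Delta d\|$ if $d\in\mathcal{F}$, and $\bar\rho(d):=\inf_{d+\Delta d\in\mathcal{F}}\|\Delta d\|$ if $d\in\mathcal{I}$. *)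

(* Vectors in R^k are functions nat -> R
   (only indices < k matter); an n x m matrix is A : nat -> nat -> R with
   entry A i j (row i < n, column j < m); the column a_j is fun i => A i j. *)
From Stdlib Require Import Reals Lra ClassicalEpsilon.
Open Scope R_scope.

Fixpoint fsum (k : nat) (f : nat -> R) : R :=
  match k with O => 0 | S k' => fsum k' f + f k' end.

(* min_{0<=j<k} f j  (junk value 0 for k = 0) *)
Fixpoint fmin (k : nat) (f : nat -> R) : R :=
  match k with
  | O => 0
  | S O => f O
  | S k' => Rmin (fmin k' f) (f k')
  end.

(* max_{0<=j<k} f j  (junk value 0 for k = 0) *)
Fixpoint fmax (k : nat) (f : nat -> R) : R :=
  match k with
  | O => 0
  | S O => f O
  | S k' => Rmax (fmax k' f) (f k')
  end.

(* least upper bound / greatest lower bound of a set of reals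
   (chosen classically; meaningful when it exists) *)
Definition Rsup (S : R -> Prop) : R :=
  epsilon (inhabits 0) (fun s => is_lub S s).
Definition Rinf (S : R -> Prop) : R := - Rsup (fun y => S (- y)).

Definition dotc (n : nat) (A : nat -> nat -> R) (j : nat) (x : nat -> R) : R :=
  fsum n (fun i => A i j * x i).

Definition norm2 (n : nat) (v : nat -> R) : R := sqrt (fsum n (fun i => v i ^ 2)).
Definition norm1 (m : nat) (w : nat -> R) : R := fsum m (fun j => Rabs (w j)).
Definition norminf (m : nat) (u : nat -> R) : R := fmax m (fun j => Rabs (u j)).

Definition matvec (n m : nat) (A : nat -> nat -> R) (w : nat -> R) : nat -> R :=
  fun i => fsum m (fun j => A i j * w j).

Definition normA12 (n m : nat) (A : nat -> nat -> R) : R :=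
  Rsup (fun r => exists w : nat -> R, norm1 m w = 1 /\ r = norm2 n (matvec n m A w)).

Definition data_norm (n m : nat) (A : nat -> nat -> R) (u : nat -> R) : R :=
  Rmax (normA12 n m A) (norminf m u).

Definition feasible (n m : nat) (A : nat -> nat -> R) (u : nat -> R) : Prop :=
  exists x : nat -> R, forall j, (j < m)%nat -> dotc n A j x <= u j.

Definition rho_bar (n m : nat) (A : nat -> nat -> R) (u : nat -> R) : R :=
  if excluded_middle_informative (feasible n m A u) then
    Rinf (fun r => exists (dA : nat -> nat -> R) (du : nat -> R),
            ~ feasible n m (fun i j => A i j + dA i j) (fun j => u j + du j)
            /\ r = data_norm n m dA du)
  else
    Rinf (fun r => exists (dA : nat -> nat -> R) (du : nat -> R),
            feasible n m (fun i j => A i j + dA i j) (fun j => u j + du j)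
            /\ r = data_norm n m dA du).

Definition zstar (n m : nat) (A : nat -> nat -> R) (u : nat -> R) : R :=
  Rsup (fun z => exists x : nat -> R, z = fmin m (fun j => u j - dotc n A j x)).

Definition tau (n m : nat) (A : nat -> nat -> R) (u : nat -> R) : R :=
  Rabs (zstar n m A u).

(* Perturb only the right-hand side, by a constant: replacing u by u + c shifts
   every slack min_j (u_j - a_j^T x) by c, at cost ||(0, c 1)|| = |c|.  If z* >= 0
   the shift c = -(z* + eps) destroys feasibility; if z* < 0 the shift
   c = -z* + eps restores it (approximating the supremum z* within eps).  Either
   way rho_bar <= |z*| + eps.  The spanning hypothesis is what makes z* finite:
   writing -a_0 as a nonnegative combination of the columns bounds every slack. *)
From Stdlib Require Import Reals Lra Lia ClassicalEpsilon Classical FunctionalExtensionality.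
Open Scope R_scope.

Lemma fsum_ext k f g : (forall i, (i < k)%nat -> f i = g i) -> fsum k f = fsum k g.
Proof.
  induction k as [|k IH]; intros H; simpl; [reflexivity|].
  rewrite IH by (intros; apply H; lia). rewrite H by lia. reflexivity.
Qed.

Lemma fsum_const0 k : fsum k (fun _ => 0) = 0.
Proof. induction k as [|k IH]; simpl; [|rewrite IH]; ring. Qed.

Lemma fsum_plus k f g : fsum k (fun i => f i + g i) = fsum k f + fsum k g.
Proof. induction k as [|k IH]; simpl; [|rewrite IH]; ring. Qed.

Lemma fsum_opp k f : fsum k (fun i => - f i) = - fsum k f.
Proof. induction k as [|k IH]; simpl; [|rewrite IH]; ring. Qed.

Lemma fsum_scal_l k c f : fsum k (fun i => c * f i) = c * fsum k f.
Proof. induction k as [|k IH]; simpl; [|rewrite IH]; ring. Qed.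

Lemma fsum_le k f g : (forall i, (i < k)%nat -> f i <= g i) -> fsum k f <= fsum k g.
Proof.
  induction k as [|k IH]; intros H; simpl; [lra|].
  assert (fsum k f <= fsum k g) by (apply IH; intros; apply H; lia).
  assert (f k <= g k) by (apply H; lia).
  lra.
Qed.

Lemma fsum_comm n m (f : nat -> nat -> R) :
  fsum m (fun j => fsum n (fun i => f i j)) = fsum n (fun i => fsum m (fun j => f i j)).
Proof.
  induction m as [|m IH]; simpl.
  - symmetry; apply fsum_const0.
  - rewrite IH, <- fsum_plus; reflexivity.
Qed.

Lemma fmin_le k f j : (j < S k)%nat -> fmin (S k) f <= f j.
Proof.
  revert j; induction k as [|k IH]; intros j Hj.
  - replace j with 0%nat by lia; simpl; lra.
  - change (fmin (S (S k)) f) with (Rmin (fmin (S k) f) (f (S k))).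
    destruct (Nat.eq_dec j (S k)) as [->|Hne]; [apply Rmin_r|].
    eapply Rle_trans; [apply Rmin_l|]. apply IH; lia.
Qed.

Lemma fmin_glb k f c : (forall j, (j < S k)%nat -> c <= f j) -> c <= fmin (S k) f.
Proof.
  induction k as [|k IH]; intros H; [simpl; apply H; lia|].
  change (fmin (S (S k)) f) with (Rmin (fmin (S k) f) (f (S k))).
  apply Rmin_glb; [apply IH; intros|]; apply H; lia.
Qed.

Lemma fmax_ge k f j : (j < S k)%nat -> f j <= fmax (S k) f.
Proof.
  revert j; induction k as [|k IH]; intros j Hj.
  - replace j with 0%nat by lia; simpl; lra.
  - change (fmax (S (S k)) f) with (Rmax (fmax (S k) f) (f (S k))).
    destruct (Nat.eq_dec j (S k)) as [->|Hne]; [apply Rmax_r|].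
    eapply Rle_trans; [|apply Rmax_l]. apply IH; lia.
Qed.

Lemma fmax_lub k f c : (forall j, (j < S k)%nat -> f j <= c) -> fmax (S k) f <= c.
Proof.
  induction k as [|k IH]; intros H; [simpl; apply H; lia|].
  change (fmax (S (S k)) f) with (Rmax (fmax (S k) f) (f (S k))).
  apply Rmax_lub; [apply IH; intros|]; apply H; lia.
Qed.

Lemma Rsup_is_lub (S : R -> Prop) s : is_lub S s -> is_lub S (Rsup S).
Proof. intros Hs. unfold Rsup. apply epsilon_spec. exists s; exact Hs. Qed.

Lemma Rsup_eq (S : R -> Prop) s : is_lub S s -> Rsup S = s.
Proof. intros Hs. exact (is_lub_u _ _ _ (Rsup_is_lub S s Hs) Hs). Qed.

Lemma Rsup_lub (S : R -> Prop) :
  bound S -> (exists x, S x) -> is_lub S (Rsup S).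
Proof.
  intros Hb He. destruct (completeness S Hb He) as [s Hs].
  exact (Rsup_is_lub S s Hs).
Qed.

Lemma Rinf_le (S : R -> Prop) r : (forall y, S y -> 0 <= y) -> S r -> Rinf S <= r.
Proof.
  intros Hnonneg Hr. unfold Rinf.
  assert (HS : S (- - r)) by (rewrite Ropp_involutive; exact Hr).
  destruct (Rsup_lub (fun y => S (- y))) as [Hub _].
  - exists 0. intros y Hy. apply Hnonneg in Hy. lra.
  - exists (- r). exact HS.
  - pose proof (Hub (- r) HS). lra.
Qed.

Lemma is_lub_approx (S : R -> Prop) s eps :
  is_lub S s -> 0 < eps -> exists y, S y /\ s - eps < y.
Proof.
  intros [_ Hleast] Heps. apply NNPP. intros Hno.
  assert (s <= s - eps); [|lra].
  apply Hleast. intros y Hy. apply Rnot_lt_le. intros Hlt. apply Hno. exists y; auto.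
Qed.

Lemma norm1_indicator0 m : norm1 (S m) (fun j => if Nat.eqb j 0 then 1 else 0) = 1.
Proof.
  unfold norm1. induction m as [|m IH].
  - simpl. rewrite Rabs_R1. ring.
  - simpl fsum in *. rewrite IH, Rabs_R0. ring.
Qed.

Lemma normA12_zero n m : normA12 n (S m) (fun _ _ => 0) = 0.
Proof.
  assert (Hnorm0 : forall w, norm2 n (matvec n (S m) (fun _ _ => 0) w) = 0).
  { intros w. unfold norm2, matvec.
    rewrite (fsum_ext n _ (fun _ => 0)), fsum_const0; [apply sqrt_0|].
    intros i _. rewrite (fsum_ext (S m) _ (fun _ => 0)), fsum_const0; [ring|].
    intros; ring. }
  apply Rsup_eq. split.
  - intros r [w [_ ->]]. rewrite Hnorm0. lra.
  - intros b Hb. apply Hb.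
    exists (fun j => if Nat.eqb j 0 then 1 else 0).
    rewrite Hnorm0. split; [apply norm1_indicator0|reflexivity].
Qed.

Lemma data_norm_nonneg n m dA du : 0 <= data_norm n (S m) dA du.
Proof.
  unfold data_norm, norminf.
  eapply Rle_trans; [apply (Rabs_pos (du 0%nat))|].
  eapply Rle_trans; [apply (fmax_ge m (fun j => Rabs (du j)) 0); lia|].
  apply Rmax_r.
Qed.

Lemma data_norm_const_rhs n m c : data_norm n (S m) (fun _ _ => 0) (fun _ => c) <= Rabs c.
Proof.
  unfold data_norm, norminf. rewrite normA12_zero.
  apply Rmax_lub; [apply Rabs_pos|]. apply fmax_lub; intros; lra.
Qed.

Lemma fsum_dotc_matvec n m A lam x :
  fsum m (fun j => lam j * dotc n A j x) = fsum n (fun i => x i * matvec n m A lam i).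
Proof.
  unfold dotc, matvec.
  transitivity (fsum m (fun j => fsum n (fun i => lam j * (A i j * x i)))).
  { apply fsum_ext; intros. rewrite fsum_scal_l. reflexivity. }
  rewrite fsum_comm. apply fsum_ext; intros.
  rewrite <- fsum_scal_l. apply fsum_ext; intros. ring.
Qed.

Definition min_slack (n m : nat) (A : nat -> nat -> R) (u x : nat -> R) : R :=
  fmin m (fun j => u j - dotc n A j x).

Section Slack.

Variables (n m : nat) (A : nat -> nat -> R) (u : nat -> R).

Lemma min_slack_le_slack x j : (j < S m)%nat -> min_slack n (S m) A u x <= u j - dotc n A j x.
Proof. apply fmin_le. Qed.

Lemma feasible_shift_iff c :
  feasible n (S m) A (fun j => u j + c) <-> exists x, - c <= min_slack n (S m) A u x.
Proof.
  split; intros [x Hx]; exists x.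
  - apply fmin_glb. intros j Hj. specialize (Hx j Hj). lra.
  - intros j Hj. pose proof (min_slack_le_slack x j Hj). lra.
Qed.

Lemma feasible_iff_min_slack_nonneg :
  feasible n (S m) A u <-> exists x, 0 <= min_slack n (S m) A u x.
Proof.
  replace (feasible n (S m) A u) with (feasible n (S m) A (fun j => u j + 0))
    by (f_equal; extensionality j; ring).
  rewrite feasible_shift_iff. split; intros [x Hx]; exists x; lra.
Qed.

(* Weighting the slack inequalities by lam >= 0 with A lam = -a_0 eliminates x:
   (sum lam) s <= lam.u + a_0^T x, while s <= u_0 - a_0^T x. *)
Lemma min_slack_bounded (lam : nat -> R) :
  (forall j, (j < S m)%nat -> 0 <= lam j) ->
  (forall i, (i < n)%nat -> matvec n (S m) A lam i = - A i 0%nat) ->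
  forall x, min_slack n (S m) A u x <= Rabs (fsum (S m) (fun j => lam j * u j)) + Rabs (u 0%nat).
Proof.
  intros Hlam Hcomb x. set (s := min_slack n (S m) A u x).
  assert (Hs : forall j, (j < S m)%nat -> s <= u j - dotc n A j x)
    by (intros; apply min_slack_le_slack; assumption).
  assert (Hweighted : s * fsum (S m) lam <= fsum (S m) (fun j => lam j * u j) + dotc n A 0 x).
  { rewrite <- fsum_scal_l.
    replace (dotc n A 0 x) with (- fsum (S m) (fun j => lam j * dotc n A j x)).
    - rewrite <- fsum_opp, <- fsum_plus. apply fsum_le. intros j Hj.
      pose proof (Hs j Hj). pose proof (Hlam j Hj). nra.
    - rewrite fsum_dotc_matvec, <- fsum_opp. unfold dotc. apply fsum_ext.
      intros i Hi. rewrite Hcomb by exact Hi. ring. }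
  assert (Hsum : 0 <= fsum (S m) lam) by (rewrite <- (fsum_const0 (S m)); apply fsum_le; exact Hlam).
  pose proof (Hs 0%nat (Nat.lt_0_succ m)).
  pose proof (Rle_abs (fsum (S m) (fun j => lam j * u j))).
  pose proof (Rabs_pos (fsum (S m) (fun j => lam j * u j))).
  pose proof (Rle_abs (u 0%nat)). pose proof (Rabs_pos (u 0%nat)).
  destruct (Rle_dec s 0); [lra|nra].
Qed.

Lemma rho_bar_le_rhs_shift c :
  (feasible n (S m) A u -> ~ feasible n (S m) A (fun j => u j + c)) ->
  (~ feasible n (S m) A u -> feasible n (S m) A (fun j => u j + c)) ->
  rho_bar n (S m) A u <= Rabs c.
Proof.
  intros Hlose Hgain.
  assert (HA : (fun i j => A i j + 0) = A).
  { extensionality i; extensionality j; ring. }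
  unfold rho_bar.
  destruct (excluded_middle_informative (feasible n (S m) A u)) as [Hf|Hf];
    (eapply Rle_trans; [apply Rinf_le|apply data_norm_const_rhs]);
    try (intros y [dA [du [_ ->]]]; apply data_norm_nonneg);
    exists (fun _ _ => 0), (fun _ => c); rewrite HA; auto.
Qed.

End Slack.

Theorem mainTheorem15 (n m : nat) (A : nat -> nat -> R) (u : nat -> R)
  (Hn : (0 < n)%nat)
  (Hunit : forall j, (j < m)%nat -> norm2 n (fun i => A i j) = 1)
  (Hspan : forall y : nat -> R, exists lam : nat -> R,
      (forall j, (j < m)%nat -> 0 <= lam j) /\
      (forall i, (i < n)%nat -> matvec n m A lam i = y i)) :
  tau n m A u >= rho_bar n m A u.
Proof.
  destruct m as [|m].
  { destruct (Hspan (fun _ => 1)) as [lam [_ H]]. specialize (H 0%nat Hn).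
    unfold matvec in H. simpl in H. lra. }
  destruct (Hspan (fun i => - A i 0%nat)) as [lam [Hlam Hcomb]].
  assert (Hz : is_lub (fun z => exists x, z = min_slack n (S m) A u x) (zstar n (S m) A u)).
  { apply Rsup_lub.
    - eexists. intros z [x ->]. exact (min_slack_bounded n m A u lam Hlam Hcomb x).
    - exists (min_slack n (S m) A u (fun _ => 0)), (fun _ => 0). reflexivity. }
  pose proof Hz as [Hub Hleast].
  set (z := zstar n (S m) A u) in *. unfold tau; fold z.
  apply Rle_ge, Rle_plus_epsilon. intros eps Heps.
  destruct (classic (feasible n (S m) A u)) as [Hf|Hf].
  - assert (Hz0 : 0 <= z).
    { apply feasible_iff_min_slack_nonneg in Hf as [x Hx].
      pose proof (Hub _ (ex_intro _ x eq_refl)). lra. }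
    apply Rle_trans with (Rabs (- (z + eps))); [|rewrite Rabs_Ropp, !Rabs_right; lra].
    apply rho_bar_le_rhs_shift; [|tauto].
    intros _ Hshift. apply feasible_shift_iff in Hshift as [x Hx].
    pose proof (Hub _ (ex_intro _ x eq_refl)). lra.
  - destruct (is_lub_approx _ _ eps Hz Heps) as [y [[x ->] Hx]].
    assert (Hz0 : z <= 0).
    { apply Hleast. intros y [x' ->]. apply Rnot_lt_le. intros Hpos.
      apply Hf, feasible_iff_min_slack_nonneg. exists x'. lra. }
    apply Rle_trans with (Rabs (- z + eps)); [|rewrite (Rabs_left1 z), (Rabs_right (- z + eps)); lra].
    apply rho_bar_le_rhs_shift; [tauto|].
    intros _. apply feasible_shift_iff. exists x. lra.
Qed.
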